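(* Let $\gamma>0$ and $R\ge600(\gamma^{3/4}+\gamma^{-3/4})$. For every $j\in\mathbb{N}$, the equation $w=G_{j,R}(w)$ has a unique solution in $F_\infty$, and this solution lies in $F_j$. The solutions for different $j$ are different.
   Context: $\arg_-(\zeta)\in[-\pi,\pi)$, $\mathrm{sq}_-(\zeta)=\sqrt{|\zeta|}e^{\frac i2\arg_-(\zeta)}$. For $j\in\mathbb{N}$: $A(w)=\log\left|\frac{\mathrm{sq}_-(w^2+i\gamma)-w}{\mathrm{sq}_-(w^2+i\gamma)+w}\right|$, $B_j(w)=\arg_-\!\left(\frac{\mathrm{sq}_-(w^2+i\gamma)-w}{\mathrm{sq}_-(w^2+i\gamma)+w}\right)+2\pi j$, $G_{j,R}(w)=\frac{-B_j(w)+iA(w)}{2R}$. The sets are $F_\infty=\{w\in\mathbb{C}:\operatorname{Re}w\le0\le\operatorname{Im}w,\ |\operatorname{Re}w|\ge2\operatorname{Im}w\}$ and $F_j=\{w\in F_\infty: B_j(w)\ge2|A(w)|\}$. *)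

From Stdlib Require Import Reals.
From Coquelicot Require Import Coquelicot.
Open Scope R_scope.

(* Principal argument with branch cut convention arg_-(z) in [-pi, pi):
   the negative real axis gets argument -pi.  arg_-(0) := 0 (irrelevant). *)
Definition arg_m (z : C) : R :=
  let x := fst z in let y := snd z in
  if Rlt_dec 0 x then atan (y / x)
  else if Rlt_dec x 0 then
         (if Rlt_dec 0 y then atan (y / x) + PI else atan (y / x) - PI)
  else if Rlt_dec 0 y then PI / 2
  else if Rlt_dec y 0 then - (PI / 2)
  else 0.

Definition sq_m (z : C) : C :=
  (sqrt (Cmod z) * cos (arg_m z / 2), sqrt (Cmod z) * sin (arg_m z / 2)).

Definition Qfrac (gamma : R) (w : C) : C :=
  let s := sq_m (Cplus (Cmult w w) (0, gamma)) in
  Cdiv (Cminus s w) (Cplus s w).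

Definition A_fun (gamma : R) (w : C) : R := ln (Cmod (Qfrac gamma w)).

Definition B_fun (gamma : R) (j : nat) (w : C) : R :=
  arg_m (Qfrac gamma w) + 2 * PI * INR j.

Definition G_fun (gamma : R) (j : nat) (Rr : R) (w : C) : C :=
  (- B_fun gamma j w / (2 * Rr), A_fun gamma w / (2 * Rr)).

Definition F_inf (w : C) : Prop :=
  fst w <= 0 /\ 0 <= snd w /\ 2 * snd w <= Rabs (fst w).

Definition F_j (gamma : R) (j : nat) (w : C) : Prop :=
  F_inf w /\ 2 * Rabs (A_fun gamma w) <= B_fun gamma j w.

From Stdlib Require Import Reals Lra Lia Psatz.
From Coquelicot Require Import Coquelicot.
Open Scope R_scope.

(* Write s = sq_m (w^2 + i gamma) and Q = (s - w) / (s + w), so that A + i arg Q is a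
   logarithm of Q.  Since s^2 - w^2 = i gamma, the derivative of log Q is -2 / s.  On the
   convex cone F_inf one has |s|^2 = |w^2 + i gamma| >= gamma / 4 and Q stays off the branch
   cut, so the mean value theorem along segments makes A and arg Q Lipschitz with constant
   4 / sqrt gamma for the taxicab distance.  The hypothesis on R gives R sqrt gamma >= 600,
   hence G_{j,R} is a contraction of ratio at most 1/150 on F_inf.  As |Q| >= 1 we have
   A >= 0, and G_{j,R} maps F_inf intersected with a small ball around G_{j,R}(0) = - pi j / R
   into itself; Banach's theorem gives the fixed point, and contraction gives its uniqueness
   in F_inf.  At a fixed point A = 2 R Im w and B_j = - 2 R Re w, so the cone condition
   |Re w| >= 2 Im w is exactly B_j >= 2 |A|.  Fixed points for different j have different
   real parts. *)

Lemma is_derive_eq (f : R -> R) (t a b : R) : is_derive f t a -> a = b -> is_derive f t b.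
Proof. now intros H <-. Qed.

Lemma is_derive_Rconst (c t : R) : is_derive (fun _ => c) t 0.
Proof. exact (is_derive_const (V := R_NormedModule) c t). Qed.

Lemma is_derive_Rplus (f g : R -> R) (t a b : R) :
  is_derive f t a -> is_derive g t b -> is_derive (fun u => f u + g u) t (a + b).
Proof. exact (is_derive_plus f g t a b). Qed.

Lemma is_derive_Rminus (f g : R -> R) (t a b : R) :
  is_derive f t a -> is_derive g t b -> is_derive (fun u => f u - g u) t (a - b).
Proof. exact (is_derive_minus f g t a b). Qed.

Lemma is_derive_Ropp (f : R -> R) (t a : R) :
  is_derive f t a -> is_derive (fun u => - f u) t (- a).
Proof. exact (is_derive_opp f t a). Qed.

Lemma is_derive_Rmult (f g : R -> R) (t a b : R) :
  is_derive f t a -> is_derive g t b ->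
  is_derive (fun u => f u * g u) t (a * g t + f t * b).
Proof. intros Hf Hg. exact (is_derive_mult f g t a b Hf Hg Rmult_comm). Qed.

Lemma is_derive_affine (c d t : R) : is_derive (fun u => c + u * d) t d.
Proof.
  eapply is_derive_eq.
  - apply is_derive_Rplus; [apply is_derive_Rconst|].
    apply is_derive_Rmult; [apply is_derive_id | apply is_derive_Rconst].
  - simpl. change (@one R_AbsRing) with 1. ring.
Qed.

Lemma is_derive_Rcomp (F g : R -> R) (t dF b : R) :
  is_derive F (g t) dF -> is_derive g t b -> is_derive (fun u => F (g u)) t (b * dF).
Proof. exact (is_derive_comp F g t dF b). Qed.

Lemma is_derive_ln_comp (f : R -> R) (t a : R) :
  is_derive f t a -> 0 < f t -> is_derive (fun u => ln (f u)) t (a / f t).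
Proof.
  intros Hf Hpos. exact (is_derive_Rcomp ln f t _ a (is_derive_ln _ Hpos) Hf).
Qed.

Lemma is_derive_atan_comp (f : R -> R) (t a : R) :
  is_derive f t a -> is_derive (fun u => atan (f u)) t (a / (1 + f t ^ 2)).
Proof.
  intros Hf. eapply is_derive_eq.
  - exact (is_derive_Rcomp atan f t _ a (is_derive_atan _) Hf).
  - unfold Rsqr. simpl. field. nra.
Qed.

Lemma is_derive_cos_comp (f : R -> R) (t a : R) :
  is_derive f t a -> is_derive (fun u => cos (f u)) t (- a * sin (f t)).
Proof.
  intros Hf. eapply is_derive_eq.
  - exact (is_derive_Rcomp cos f t _ a (is_derive_cos _) Hf).
  - ring.
Qed.

Lemma is_derive_sin_comp (f : R -> R) (t a : R) :
  is_derive f t a -> is_derive (fun u => sin (f u)) t (a * cos (f t)).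
Proof. exact (fun Hf => is_derive_Rcomp sin f t _ a (is_derive_sin _) Hf). Qed.

Lemma is_derive_continuous_R (f : R -> R) (t a : R) :
  is_derive f t a -> filterlim f (locally t) (locally (f t)).
Proof.
  intros Hf.
  exact (ex_derive_continuous (K := R_AbsRing) (V := R_NormedModule) f t (ex_intro _ a Hf)).
Qed.

Lemma is_derive_locally_gt0 (f : R -> R) (t a : R) :
  is_derive f t a -> 0 < f t -> locally t (fun u => 0 < f u).
Proof. intros Hf Hpos. apply (is_derive_continuous_R f t a Hf). now apply (open_gt 0). Qed.

Lemma is_derive_locally_lt0 (f : R -> R) (t a : R) :
  is_derive f t a -> f t < 0 -> locally t (fun u => f u < 0).
Proof.
  intros Hf Hneg. apply (is_derive_continuous_R f t a Hf (fun y => y < 0)).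
  now apply (open_lt 0).
Qed.

(** * The argument and the square root [sq_m] *)

Definition off_branch_cut (z : C) : Prop := 0 < fst z \/ snd z <> 0.

Lemma off_branch_cut_neq0 (z : C) : off_branch_cut z -> z <> 0%C.
Proof. intros [H | H] E; rewrite E in H; simpl in H; lra. Qed.

Lemma off_branch_cut_cases (z : C) : off_branch_cut z -> 0 < fst z \/ 0 < snd z \/ snd z < 0.
Proof. intros [H | H]; [lra | destruct (Rdichotomy _ 0 H); lra]. Qed.

Lemma arg_m_re_pos (x y : R) : 0 < x -> arg_m (x, y) = atan (y / x).
Proof. intros Hx. unfold arg_m; simpl. now destruct (Rlt_dec 0 x). Qed.

Lemma atan_pos_inv (u : R) : 0 < u -> atan u = PI / 2 - atan (/ u).
Proof. intros H. rewrite atan_inv by exact H. ring. Qed.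

Lemma arg_m_im_pos (x y : R) : 0 < y -> arg_m (x, y) = PI / 2 - atan (x / y).
Proof.
  intros Hy. unfold arg_m; simpl.
  destruct (Rlt_dec 0 x); [|destruct (Rlt_dec x 0)].
  - rewrite atan_pos_inv by (apply Rdiv_lt_0_compat; lra).
    now replace (/ (y / x)) with (x / y) by (field; lra).
  - destruct (Rlt_dec 0 y); [|lra].
    replace (y / x) with (- (y / - x)) by (field; lra).
    rewrite atan_opp, atan_pos_inv by (apply Rdiv_lt_0_compat; lra).
    replace (/ (y / - x)) with (- (x / y)) by (field; lra).
    rewrite atan_opp. lra.
  - destruct (Rlt_dec 0 y); [|lra].
    replace x with 0 by lra. unfold Rdiv. rewrite Rmult_0_l, atan_0. lra.
Qed.

Lemma arg_m_im_neg (x y : R) : y < 0 -> arg_m (x, y) = - (PI / 2) - atan (x / y).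
Proof.
  intros Hy. unfold arg_m; simpl.
  destruct (Rlt_dec 0 x); [|destruct (Rlt_dec x 0)].
  - replace (y / x) with (- (- y / x)) by (field; lra).
    rewrite atan_opp, atan_pos_inv by (apply Rdiv_lt_0_compat; lra).
    replace (/ (- y / x)) with (- (x / y)) by (field; lra).
    rewrite atan_opp. lra.
  - destruct (Rlt_dec 0 y); [lra|].
    replace (y / x) with (- y / - x) by (field; lra).
    rewrite atan_pos_inv by (apply Rdiv_lt_0_compat; lra).
    replace (/ (- y / - x)) with (x / y) by (field; lra). lra.
  - destruct (Rlt_dec 0 y); [lra|]. destruct (Rlt_dec y 0); [|lra].
    replace x with 0 by lra. unfold Rdiv. rewrite Rmult_0_l, atan_0. lra.
Qed.

Lemma sqrt_1_plus_Rsqr_pos (u : R) : 0 < sqrt (1 + u²).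
Proof. apply sqrt_lt_R0. pose proof (Rle_0_sqr u). lra. Qed.

Lemma sqrt_sum_sq_factor (a b : R) : a <> 0 ->
  sqrt (a ^ 2 + b ^ 2) = Rabs a * sqrt (1 + (b / a)²).
Proof.
  intros Ha.
  replace (a ^ 2 + b ^ 2) with (a² * (1 + (b / a)²)) by (unfold Rsqr; field; exact Ha).
  rewrite sqrt_mult, sqrt_Rsqr_abs; [reflexivity | apply Rle_0_sqr |].
  pose proof (Rle_0_sqr (b / a)). lra.
Qed.

Lemma arg_m_polar (z : C) : off_branch_cut z ->
  Cmod z * cos (arg_m z) = fst z /\ Cmod z * sin (arg_m z) = snd z.
Proof.
  intros Hz. destruct (off_branch_cut_cases z Hz) as [Hx | [Hy | Hy]];
    destruct z as [x y]; unfold Cmod; cbn [fst snd] in *.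
  - rewrite arg_m_re_pos, sqrt_sum_sq_factor, cos_atan, sin_atan, Rabs_right by lra.
    pose proof (sqrt_1_plus_Rsqr_pos (y / x)).
    unfold Rsqr in *. split; field; repeat split; lra.
  - rewrite arg_m_im_pos, Rplus_comm, sqrt_sum_sq_factor, cos_shift, sin_shift, cos_atan,
      sin_atan, Rabs_right by lra.
    pose proof (sqrt_1_plus_Rsqr_pos (x / y)).
    unfold Rsqr in *. split; field; repeat split; lra.
  - rewrite arg_m_im_neg, Rplus_comm, sqrt_sum_sq_factor, Rabs_left by lra.
    replace (- (PI / 2) - atan (x / y)) with (- (PI / 2 - - atan (x / y))) by ring.
    rewrite cos_neg, sin_neg, cos_shift, sin_shift, sin_neg, cos_neg, cos_atan, sin_atan.
    pose proof (sqrt_1_plus_Rsqr_pos (x / y)).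
    unfold Rsqr in *. split; field; repeat split; lra.
Qed.

Lemma arg_m_bound_off_cut (z : C) : off_branch_cut z -> - PI < arg_m z < PI.
Proof.
  intros Hz. pose proof PI_RGT_0.
  destruct (off_branch_cut_cases z Hz) as [Hx | [Hy | Hy]]; destruct z as [x y]; cbn [fst snd] in *.
  - rewrite arg_m_re_pos by exact Hx. pose proof (atan_bound (y / x)). lra.
  - rewrite arg_m_im_pos by exact Hy. pose proof (atan_bound (x / y)). lra.
  - rewrite arg_m_im_neg by exact Hy. pose proof (atan_bound (x / y)). lra.
Qed.

Lemma Cmod_sq_m (z : C) : Cmod (sq_m z) = sqrt (Cmod z).
Proof.
  unfold sq_m, Cmod at 1; cbn [fst snd].
  replace ((sqrt (Cmod z) * cos (arg_m z / 2)) ^ 2 + (sqrt (Cmod z) * sin (arg_m z / 2)) ^ 2)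
    with (sqrt (Cmod z) ^ 2 * ((sin (arg_m z / 2))² + (cos (arg_m z / 2))²))
    by (unfold Rsqr; ring).
  rewrite sin2_cos2, Rmult_1_r. apply sqrt_pow2, sqrt_pos.
Qed.

Lemma sq_m_sqr (z : C) : off_branch_cut z -> (sq_m z * sq_m z)%C = z.
Proof.
  intros Hz. destruct (arg_m_polar z Hz) as [Hre Him].
  rewrite <- (sqrt_sqrt _ (Cmod_ge_0 z)) in Hre, Him.
  replace (arg_m z) with (2 * (arg_m z / 2)) in Hre, Him by field.
  rewrite cos_2a in Hre. rewrite sin_2a in Him.
  unfold sq_m. set (r := sqrt (Cmod z)) in *. set (h := arg_m z / 2) in *. clearbody r h.
  destruct z as [x y]. unfold Cmult. cbn [fst snd] in *.
  f_equal; [rewrite <- Hre | rewrite <- Him]; ring.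
Qed.

Lemma sq_m_re_pos (z : C) : off_branch_cut z -> 0 < fst (sq_m z).
Proof.
  intros Hz. pose proof (arg_m_bound_off_cut z Hz).
  apply Rmult_lt_0_compat.
  - apply sqrt_lt_R0, Cmod_gt_0, off_branch_cut_neq0, Hz.
  - apply cos_gt_0; lra.
Qed.

Definition is_derive_C (f : R -> C) (t : R) (v : C) : Prop :=
  is_derive (fun u => fst (f u)) t (fst v) /\ is_derive (fun u => snd (f u)) t (snd v).

Lemma is_derive_C_eq (f : R -> C) (t : R) (a b : C) :
  is_derive_C f t a -> a = b -> is_derive_C f t b.
Proof. now intros H <-. Qed.

Lemma is_derive_C_const (c : C) (t : R) : is_derive_C (fun _ => c) t 0%C.
Proof. split; apply is_derive_Rconst. Qed.

Lemma is_derive_C_plus (f g : R -> C) (t : R) (a b : C) :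
  is_derive_C f t a -> is_derive_C g t b -> is_derive_C (fun u => f u + g u)%C t (a + b)%C.
Proof. intros [Hf1 Hf2] [Hg1 Hg2]. split; now apply is_derive_Rplus. Qed.

Lemma is_derive_C_minus (f g : R -> C) (t : R) (a b : C) :
  is_derive_C f t a -> is_derive_C g t b -> is_derive_C (fun u => f u - g u)%C t (a - b)%C.
Proof. intros [Hf1 Hf2] [Hg1 Hg2]. split; now apply is_derive_Rminus. Qed.

Lemma is_derive_C_mult (f g : R -> C) (t : R) (a b : C) :
  is_derive_C f t a -> is_derive_C g t b ->
  is_derive_C (fun u => f u * g u)%C t (a * g t + f t * b)%C.
Proof.
  intros [Hf1 Hf2] [Hg1 Hg2].
  split.
  - eapply is_derive_eq.
    + apply is_derive_Rminus; apply is_derive_Rmult; eassumption.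
    + simpl. ring.
  - eapply is_derive_eq.
    + apply is_derive_Rplus; apply is_derive_Rmult; eassumption.
    + simpl. ring.
Qed.

Lemma Cnorm2_pos (z : C) : z <> 0%C -> 0 < fst z ^ 2 + snd z ^ 2.
Proof.
  destruct z as [x y]. intros Hz. cbn [fst snd].
  destruct (Req_dec x 0) as [-> | Hx].
  - assert (y <> 0) by (intros ->; now apply Hz). pose proof (pow2_gt_0 y). nra.
  - pose proof (pow2_gt_0 x Hx). pose proof (pow2_ge_0 y). lra.
Qed.

Lemma is_derive_C_inv (f : R -> C) (t : R) (a : C) :
  is_derive_C f t a -> f t <> 0%C -> is_derive_C (fun u => / f u)%C t (- a / f t / f t)%C.
Proof.
  intros [Hf1 Hf2] Hnz. pose proof (Cnorm2_pos _ Hnz) as Hpos.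
  assert (Hd : is_derive (fun u => fst (f u) ^ 2 + snd (f u) ^ 2) t
                 (INR 2 * fst a * fst (f t) ^ 1 + INR 2 * snd a * snd (f t) ^ 1))
    by (apply is_derive_Rplus; now apply is_derive_pow).
  split; eapply is_derive_eq.
  - apply is_derive_div; [exact Hf1 | exact Hd | lra].
  - cbv beta. destruct (f t) as [x y], a as [ax ay]. cbn [fst snd] in *.
    simpl. field. intros E. nra.
  - apply is_derive_div; [apply is_derive_Ropp; exact Hf2 | exact Hd | lra].
  - cbv beta. destruct (f t) as [x y], a as [ax ay]. cbn [fst snd] in *.
    simpl. field. intros E. nra.
Qed.

Lemma is_derive_Cmod (q : R -> C) (t : R) (a : C) :
  is_derive_C q t a -> q t <> 0%C ->
  is_derive (fun u => Cmod (q u)) t (Cmod (q t) * fst (a / q t)%C).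
Proof.
  intros [H1 H2] Hnz. pose proof (Cnorm2_pos _ Hnz) as Hpos.
  unfold Cmod. eapply is_derive_eq.
  - apply is_derive_sqrt; [apply is_derive_Rplus; apply is_derive_pow; eassumption | exact Hpos].
  - cbv beta. pose proof (sqrt_lt_R0 _ Hpos) as Hr0.
    pose proof (sqrt_sqrt _ (Rlt_le _ _ Hpos)) as Hr.
    destruct (q t) as [x y], a as [ax ay]. cbn [fst snd Cdiv Cmult Cinv] in *.
    set (r := sqrt (x ^ 2 + y ^ 2)) in *. rewrite <- Hr. simpl. field. lra.
Qed.

Lemma is_derive_ln_Cmod (q : R -> C) (t : R) (a : C) :
  is_derive_C q t a -> q t <> 0%C -> is_derive (fun u => ln (Cmod (q u))) t (fst (a / q t)%C).
Proof.
  intros Hq Hnz. pose proof (proj1 (Cmod_gt_0 _) Hnz).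
  eapply is_derive_eq; [apply is_derive_ln_comp; [apply is_derive_Cmod|]; eassumption |].
  cbv beta. field. lra.
Qed.

Lemma is_derive_arg_m (q : R -> C) (t : R) (a : C) :
  is_derive_C q t a -> off_branch_cut (q t) -> is_derive (fun u => arg_m (q u)) t (snd (a / q t)%C).
Proof.
  intros [H1 H2] Hcut. pose proof (Cnorm2_pos _ (off_branch_cut_neq0 _ Hcut)) as Hpos.
  destruct (off_branch_cut_cases _ Hcut) as [Hx | [Hy | Hy]].
  - apply (is_derive_ext_loc (fun u => atan (snd (q u) / fst (q u)))).
    + apply (filter_imp (fun u => 0 < fst (q u))); [|exact (is_derive_locally_gt0 _ _ _ H1 Hx)].
      intros u Hu. destruct (q u). now rewrite arg_m_re_pos.
    + eapply is_derive_eq; [apply is_derive_atan_comp, is_derive_div; eauto; lra |].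
      cbv beta. destruct (q t) as [x y], a as [ax ay]. cbn [fst snd] in *. simpl. field. nra.
  - apply (is_derive_ext_loc (fun u => PI / 2 - atan (fst (q u) / snd (q u)))).
    + apply (filter_imp (fun u => 0 < snd (q u))); [|exact (is_derive_locally_gt0 _ _ _ H2 Hy)].
      intros u Hu. destruct (q u). now rewrite arg_m_im_pos.
    + eapply is_derive_eq.
      { apply is_derive_Rminus; [apply is_derive_Rconst |].
        apply is_derive_atan_comp, is_derive_div; eauto; lra. }
      cbv beta. destruct (q t) as [x y], a as [ax ay]. cbn [fst snd] in *. simpl. field. nra.
  - apply (is_derive_ext_loc (fun u => - (PI / 2) - atan (fst (q u) / snd (q u)))).
    + apply (filter_imp (fun u => snd (q u) < 0)); [|exact (is_derive_locally_lt0 _ _ _ H2 Hy)].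
      intros u Hu. destruct (q u). now rewrite arg_m_im_neg.
    + eapply is_derive_eq.
      { apply is_derive_Rminus; [apply is_derive_Rconst |].
        apply is_derive_atan_comp, is_derive_div; eauto; lra. }
      cbv beta. destruct (q t) as [x y], a as [ax ay]. cbn [fst snd] in *. simpl. field. nra.
Qed.

Lemma is_derive_C_sq_m (z : R -> C) (t : R) (a : C) :
  is_derive_C z t a -> off_branch_cut (z t) ->
  is_derive_C (fun u => sq_m (z u)) t (sq_m (z t) * (a / z t) / 2)%C.
Proof.
  intros Hz Hcut. pose proof (off_branch_cut_neq0 _ Hcut) as Hnz.
  pose proof (proj1 (Cmod_gt_0 _) Hnz) as Hpos.
  assert (Hsqrt : is_derive (fun u => sqrt (Cmod (z u))) t
                    (Cmod (z t) * fst (a / z t)%C / (2 * sqrt (Cmod (z t)))))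
    by (apply is_derive_sqrt; [apply is_derive_Cmod|]; assumption).
  assert (Hhalf : is_derive (fun u => arg_m (z u) / 2) t (snd (a / z t)%C * / 2))
    by (eapply is_derive_eq; [apply is_derive_Rmult; [exact (is_derive_arg_m z t a Hz Hcut)
                                                     | apply is_derive_Rconst] | cbv beta; ring]).
  pose proof (sqrt_lt_R0 _ Hpos) as Hr0. pose proof (sqrt_sqrt _ (Rlt_le _ _ Hpos)) as Hr.
  unfold sq_m. set (k := (a / z t)%C) in *. set (h := arg_m (z t) / 2) in *.
  set (r := sqrt (Cmod (z t))) in *. rewrite <- Hr in Hsqrt.
  destruct k as [kx ky]. cbn [fst snd] in *. split.
  - eapply is_derive_eq; [apply is_derive_Rmult; [exact Hsqrt | apply is_derive_cos_comp, Hhalf] |].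
    cbv beta. fold h r. simpl. field. lra.
  - eapply is_derive_eq; [apply is_derive_Rmult; [exact Hsqrt | apply is_derive_sin_comp, Hhalf] |].
    cbv beta. fold h r. simpl. field. lra.
Qed.

Lemma F_inf_elim (w : C) : F_inf w -> fst w <= 0 /\ 0 <= snd w /\ 2 * snd w <= - fst w.
Proof. intros (H1 & H2 & H3). rewrite Rabs_left1 in H3 by exact H1. lra. Qed.

Definition sroot (gamma : R) (w : C) : C := sq_m (w * w + (0, gamma))%C.

Lemma Qfrac_sroot (gamma : R) (w : C) :
  Qfrac gamma w = ((sroot gamma w - w) / (sroot gamma w + w))%C.
Proof. reflexivity. Qed.

Section Sroot.

Variables (gamma : R) (w : C).
Hypotheses (Hgamma : 0 < gamma) (Hw : F_inf w).

Lemma sqr_shift_off_cut : off_branch_cut (w * w + (0, gamma))%C.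
Proof.
  destruct (F_inf_elim w Hw) as (H1 & H2 & H3). destruct w as [x y].
  unfold off_branch_cut; simpl in *.
  destruct (Req_dec x 0) as [-> | Hx].
  - right. intros E. nra.
  - left. pose proof (Rsqr_pos_lt x Hx). unfold Rsqr in *. nra.
Qed.

Lemma Cmod_sqr_shift_ge : gamma / 4 <= Cmod (w * w + (0, gamma))%C.
Proof.
  destruct (F_inf_elim w Hw) as (H1 & H2 & H3). destruct w as [x y].
  unfold Cmod. rewrite <- (sqrt_pow2 (gamma / 4)) by lra. apply sqrt_le_1_alt. simpl in *.
  assert (Hyx : 4 * (y * y) <= x * x) by nra.
  destruct (Rle_lt_dec (x * x) (gamma / 2)).
  - assert (gamma / 2 <= x * y + y * x + gamma) by nra. nra.
  - assert (gamma / 4 <= x * x - y * y + 0) by nra.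
    pose proof (Rle_0_sqr (x * y + y * x + gamma)). unfold Rsqr in *. nra.
Qed.

Lemma sroot_sqr : (sroot gamma w * sroot gamma w)%C = (w * w + (0, gamma))%C.
Proof. exact (sq_m_sqr _ sqr_shift_off_cut). Qed.

Lemma sroot_re_pos : 0 < fst (sroot gamma w).
Proof. exact (sq_m_re_pos _ sqr_shift_off_cut). Qed.

Lemma sroot_neq0 : sroot gamma w <> 0%C.
Proof. intros E. pose proof sroot_re_pos as Hp. rewrite E in Hp. simpl in Hp. lra. Qed.

Lemma Cmod_sroot_ge : sqrt gamma / 2 <= Cmod (sroot gamma w).
Proof.
  unfold sroot. rewrite Cmod_sq_m, <- (sqrt_pow2 (sqrt gamma / 2)).
  - apply sqrt_le_1_alt. pose proof (sqrt_sqrt gamma (Rlt_le _ _ Hgamma)).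
    pose proof Cmod_sqr_shift_ge. simpl. nra.
  - pose proof (sqrt_pos gamma). lra.
Qed.

Lemma Cmod_log_derivative_le (d : C) :
  Cmod (- (2) * d / sroot gamma w)%C <= 4 / sqrt gamma * Cmod d.
Proof.
  pose proof Cmod_sroot_ge. pose proof (sqrt_lt_R0 _ Hgamma). pose proof (Cmod_ge_0 d).
  rewrite Cmod_div, Cmod_mult, Cmod_opp, Cmod_R, Rabs_right by (lra || exact sroot_neq0).
  unfold Rdiv. apply Rle_trans with (2 * Cmod d * / (sqrt gamma / 2)).
  - apply Rmult_le_compat; [lra | left; apply Rinv_0_lt_compat; lra | lra |].
    apply Rinv_le_contravar; lra.
  - apply Req_le. field. lra.
Qed.

Lemma sroot_pm_neq0 : (sroot gamma w + w)%C <> 0%C /\ (sroot gamma w - w)%C <> 0%C.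
Proof.
  pose proof sroot_sqr as Hsq. destruct (sroot gamma w) as [p q], w as [x y].
  unfold Cmult, Cplus, Cminus, Copp in *. cbn [fst snd] in *.
  injection Hsq as Hre Him.
  split; intros E; injection E as E1 E2; nra.
Qed.

(* |s - w| >= |s + w| iff Re s Re w + Im s Im w <= 0, which holds on the cone because
   Re w <= - Im w <= 0 and Im s <= Re s. *)
Lemma Cmod_Qfrac_ge1 : 1 <= Cmod (Qfrac gamma w).
Proof.
  destruct sroot_pm_neq0 as [Hplus _].
  rewrite Qfrac_sroot, Cmod_div by exact Hplus.
  pose proof (proj1 (Cmod_gt_0 _) Hplus).
  apply (Rmult_le_reg_r (Cmod (sroot gamma w + w))); [lra|].
  unfold Rdiv. rewrite Rmult_1_l, Rmult_assoc, Rinv_l, Rmult_1_r by lra.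
  pose proof sroot_sqr as Hsq. pose proof sroot_re_pos as Hp.
  destruct (F_inf_elim w Hw) as (H1 & H2 & H3).
  unfold Cmod. apply sqrt_le_1_alt.
  destruct (sroot gamma w) as [p q], w as [x y].
  unfold Cmult, Cplus, Cminus, Copp in *. simpl in *. injection Hsq as Hre Him.
  assert (Hyx : y * y <= x * x) by nra.
  assert (Hqp : q <= p) by (destruct (Rle_dec q 0); nra).
  assert (Hqy : q * y <= p * y) by nra.
  nra.
Qed.

(* Im Q vanishes iff s is a real multiple of w; since s^2 - w^2 = i gamma is not real, this
   forces w = 0, where Q = 1. *)
Lemma Qfrac_off_cut : off_branch_cut (Qfrac gamma w).
Proof.
  destruct sroot_pm_neq0 as [Hplus _].
  pose proof sroot_sqr as Hsq. pose proof sroot_re_pos as Hp.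
  destruct (F_inf_elim w Hw) as (H1 & H2 & H3).
  pose proof (Cnorm2_pos _ Hplus) as HD.
  rewrite Qfrac_sroot. unfold off_branch_cut.
  destruct (sroot gamma w) as [p q], w as [x y].
  unfold Cdiv, Cmult, Cinv, Cplus, Cminus, Copp in *. simpl in *. injection Hsq as Hre Him.
  set (D := (p + x) * ((p + x) * 1) + (q + y) * ((q + y) * 1)) in *.
  destruct (Req_dec (q * x) (p * y)) as [Hpar | Hpar].
  - left. destruct (Req_dec x 0) as [Hx | Hx].
    + assert (y = 0) by lra. subst x y.
      replace ((p + - 0) * ((p + 0) / D) - (q + - 0) * (- (q + 0) / D))
        with ((p * p + q * q) / D) by (field; lra).
      apply Rdiv_lt_0_compat; nra.
    + exfalso. apply Hplus.
      assert (Hxy : 0 < x * x - y * y) by (pose proof (Rsqr_pos_lt x Hx); unfold Rsqr in *; nra).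
      assert (Hpx : p * p = x * x).
      { assert (Hprod : (p * p - x * x) * (x * x - y * y) = 0).
        { transitivity (x * x * ((p * p - q * q) - (x * x - y * y + 0))
                        + ((q * x) * (q * x) - (p * y) * (p * y))); [ring|].
          rewrite Hre, Hpar. ring. }
        apply Rmult_integral in Hprod. lra. }
      assert (p = - x) by nra. subst p. assert (q = - y) by nra. subst q.
      apply injective_projections; simpl; ring.
  - right. replace ((p + - x) * (- (q + y) / D) + (q + - y) * ((p + x) / D))
      with (2 * (q * x - p * y) / D) by (field; lra).
    intros E. apply Hpar. unfold Rdiv in E. apply Rmult_integral in E.
    destruct E as [E | E]; [lra | pose proof (Rinv_0_lt_compat _ HD); lra].
Qed.

End Sroot.

(** * Lipschitz bounds for [A_fun] and [arg_m] of [Qfrac] *)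

Definition segment (w0 w1 : C) (u : R) : C :=
  (fst w0 + u * (fst w1 - fst w0), snd w0 + u * (snd w1 - snd w0)).

Lemma segment_0 (w0 w1 : C) : segment w0 w1 0 = w0.
Proof. destruct w0. unfold segment. simpl. f_equal; ring. Qed.

Lemma segment_1 (w0 w1 : C) : segment w0 w1 1 = w1.
Proof. destruct w0, w1. unfold segment. simpl. f_equal; ring. Qed.

Lemma is_derive_C_segment (w0 w1 : C) (t : R) : is_derive_C (segment w0 w1) t (w1 - w0)%C.
Proof. split; apply is_derive_affine. Qed.

Lemma F_inf_segment (w0 w1 : C) (u : R) :
  F_inf w0 -> F_inf w1 -> 0 <= u <= 1 -> F_inf (segment w0 w1 u).
Proof.
  intros H0 H1 Hu.
  destruct (F_inf_elim _ H0) as (A1 & A2 & A3), (F_inf_elim _ H1) as (B1 & B2 & B3).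
  destruct w0 as [x0 y0], w1 as [x1 y1]. cbn [fst snd] in *.
  assert (Hx : x0 + u * (x1 - x0) <= 0) by nra.
  unfold F_inf, segment; cbn [fst snd]. rewrite Rabs_left1 by exact Hx. repeat split; nra.
Qed.

Lemma is_derive_log_Qfrac_segment (gamma : R) (w0 w1 : C) (t : R) :
  0 < gamma -> F_inf (segment w0 w1 t) ->
  let k := (- (2) * (w1 - w0) / sroot gamma (segment w0 w1 t))%C in
  is_derive (fun u => A_fun gamma (segment w0 w1 u)) t (fst k) /\
  is_derive (fun u => arg_m (Qfrac gamma (segment w0 w1 u))) t (snd k).
Proof.
  intros Hgamma Hw k.
  (* With d = w1 - w0: s' = w d / s because s^2 = w^2 + i gamma, and then
     Q' / Q = (s' - d) / (s - w) - (s' + d) / (s + w) = -2 d / s. *)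
  set (w := segment w0 w1 t) in *. set (d := (w1 - w0)%C) in *. set (s := sroot gamma w) in *.
  pose proof (is_derive_C_segment w0 w1 t) as Hseg. fold d in Hseg.
  assert (Hs : is_derive_C (fun u => sroot gamma (segment w0 w1 u)) t (w * d / s)%C).
  { eapply is_derive_C_eq.
    - apply (is_derive_C_sq_m (fun u => segment w0 w1 u * segment w0 w1 u + (0, gamma))%C).
      + apply is_derive_C_plus; [apply is_derive_C_mult; exact Hseg | apply is_derive_C_const].
      + exact (sqr_shift_off_cut gamma w Hgamma Hw).
    - cbv beta. fold w. change (sq_m (w * w + (0, gamma))%C) with s.
      rewrite <- (sroot_sqr gamma w Hgamma Hw). fold s.
      field. exact (sroot_neq0 gamma w Hgamma Hw). }
  destruct (sroot_pm_neq0 gamma w Hgamma Hw) as [Hplus Hminus]. fold s in Hplus, Hminus.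
  pose proof (sroot_neq0 gamma w Hgamma Hw) as Hs0. fold s in Hs0.
  pose proof (Qfrac_off_cut gamma w Hgamma Hw) as Hcut.
  pose proof (off_branch_cut_neq0 _ Hcut) as HQ0.
  assert (HQ : is_derive_C (fun u => Qfrac gamma (segment w0 w1 u)) t (k * Qfrac gamma w)%C).
  { eapply is_derive_C_eq.
    - change (fun u => Qfrac gamma (segment w0 w1 u)) with
        (fun u => (sroot gamma (segment w0 w1 u) - segment w0 w1 u)
                  * / (sroot gamma (segment w0 w1 u) + segment w0 w1 u))%C.
      apply is_derive_C_mult; [apply is_derive_C_minus; [exact Hs | exact Hseg] |].
      apply is_derive_C_inv; [apply is_derive_C_plus; [exact Hs | exact Hseg] | exact Hplus].
    - cbv beta. fold w s. unfold k. rewrite Qfrac_sroot. fold s. field. repeat split; assumption. }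
  split.
  - eapply is_derive_eq; [apply (is_derive_ln_Cmod _ _ _ HQ HQ0) |].
    fold w. f_equal. field. exact HQ0.
  - eapply is_derive_eq; [apply (is_derive_arg_m _ _ _ HQ Hcut) |].
    fold w. f_equal. field. exact HQ0.
Qed.

Definition dist1 (a b : C) : R := Rabs (fst a - fst b) + Rabs (snd a - snd b).

Lemma dist1_ge0 (a b : C) : 0 <= dist1 a b.
Proof.
  unfold dist1. pose proof (Rabs_pos (fst a - fst b)). pose proof (Rabs_pos (snd a - snd b)). lra.
Qed.

Lemma dist1_sym (a b : C) : dist1 a b = dist1 b a.
Proof. unfold dist1. now rewrite (Rabs_minus_sym (fst a)), (Rabs_minus_sym (snd a)). Qed.

Lemma dist1_triangle (a b c : C) : dist1 a c <= dist1 a b + dist1 b c.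
Proof.
  unfold dist1.
  pose proof (Rabs_triang (fst a - fst b) (fst b - fst c)).
  pose proof (Rabs_triang (snd a - snd b) (snd b - snd c)).
  replace (fst a - fst b + (fst b - fst c)) with (fst a - fst c) in * by ring.
  replace (snd a - snd b + (snd b - snd c)) with (snd a - snd c) in * by ring.
  lra.
Qed.

Lemma dist1_eq0 (a b : C) : dist1 a b <= 0 -> a = b.
Proof.
  unfold dist1. intros H.
  pose proof (Rabs_pos (fst a - fst b)). pose proof (Rabs_pos (snd a - snd b)).
  apply injective_projections; apply Rminus_diag_uniq, Rabs_eq_0; lra.
Qed.

Lemma Cmod_sub_le_dist1 (a b : C) : Cmod (a - b)%C <= dist1 a b.
Proof.
  unfold Cmod, dist1. simpl fst; simpl snd. fold (fst a - fst b) (snd a - snd b).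
  set (x := fst a - fst b). set (y := snd a - snd b).
  pose proof (Rabs_pos x). pose proof (Rabs_pos y).
  rewrite <- (sqrt_pow2 (Rabs x + Rabs y)) by lra. apply sqrt_le_1_alt.
  rewrite <- (pow2_abs x), <- (pow2_abs y). nra.
Qed.

Lemma mean_value_bound (f df : R -> R) (a b M : R) : a <= b ->
  (forall t, a <= t <= b -> is_derive f t (df t)) ->
  (forall t, a <= t <= b -> Rabs (df t) <= M) ->
  Rabs (f b - f a) <= M * (b - a).
Proof.
  intros Hab Hd Hbound.
  destruct (MVT_gen f a b df) as (c & Hc & ->).
  - intros t Ht. rewrite Rmin_left, Rmax_right in Ht by exact Hab. apply Hd. lra.
  - intros t Ht. rewrite Rmin_left, Rmax_right in Ht by exact Hab.
    apply continuity_pt_filterlim, (is_derive_continuous_R f t (df t)), Hd. lra.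
  - rewrite Rmin_left, Rmax_right in Hc by exact Hab.
    rewrite Rabs_mult, (Rabs_right (b - a)) by lra.
    apply Rmult_le_compat_r; [lra | now apply Hbound].
Qed.

Lemma log_Qfrac_lipschitz (gamma : R) (w0 w1 : C) : 0 < gamma -> F_inf w0 -> F_inf w1 ->
  Rabs (A_fun gamma w1 - A_fun gamma w0) <= 4 / sqrt gamma * dist1 w1 w0 /\
  Rabs (arg_m (Qfrac gamma w1) - arg_m (Qfrac gamma w0)) <= 4 / sqrt gamma * dist1 w1 w0.
Proof.
  intros Hgamma H0 H1.
  set (k := fun t => (- (2) * (w1 - w0) / sroot gamma (segment w0 w1 t))%C).
  assert (Hk : forall t, 0 <= t <= 1 -> Cmod (k t) <= 4 / sqrt gamma * dist1 w1 w0).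
  { intros t Ht. pose proof (sqrt_lt_R0 _ Hgamma). pose proof (Cmod_sub_le_dist1 w1 w0).
    pose proof (Cmod_log_derivative_le gamma _ Hgamma (F_inf_segment w0 w1 t H0 H1 Ht) (w1 - w0)).
    assert (0 <= 4 / sqrt gamma) by (apply Rlt_le, Rdiv_lt_0_compat; lra).
    unfold k. nra. }
  assert (Hmvt : forall (f : R -> R) (proj : C -> R),
             (forall t, 0 <= t <= 1 -> is_derive f t (proj (k t))) ->
             (forall c, Rabs (proj c) <= Cmod c) ->
             Rabs (f 1 - f 0) <= 4 / sqrt gamma * dist1 w1 w0).
  { intros f proj Hf Hproj.
    replace (4 / sqrt gamma * dist1 w1 w0) with (4 / sqrt gamma * dist1 w1 w0 * (1 - 0)) by ring.
    apply (mean_value_bound f (fun t => proj (k t))); [lra | exact Hf |].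
    intros t Ht. eapply Rle_trans; [apply Hproj | exact (Hk t Ht)]. }
  split.
  - rewrite <- (segment_1 w0 w1) at 1. rewrite <- (segment_0 w0 w1) at 2.
    apply (Hmvt (fun u => A_fun gamma (segment w0 w1 u)) fst); [|exact re_le_Cmod].
    intros t Ht. exact (proj1 (is_derive_log_Qfrac_segment gamma w0 w1 t Hgamma
                                  (F_inf_segment w0 w1 t H0 H1 Ht))).
  - rewrite <- (segment_1 w0 w1) at 1. rewrite <- (segment_0 w0 w1) at 2.
    apply (Hmvt (fun u => arg_m (Qfrac gamma (segment w0 w1 u))) snd).
    + intros t Ht. exact (proj2 (is_derive_log_Qfrac_segment gamma w0 w1 t Hgamma
                                    (F_inf_segment w0 w1 t H0 H1 Ht))).
    + intros c. eapply Rle_trans; [apply Rmax_r | apply Rmax_Cmod].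
Qed.

(** * The contraction principle for the taxicab distance *)

Definition converges1 (u : nat -> C) (l : C) : Prop :=
  forall eps, 0 < eps -> exists N, forall n, (N <= n)%nat -> dist1 (u n) l < eps.

Definition seq_closed (D : C -> Prop) : Prop :=
  forall u l, (forall n, D (u n)) -> converges1 u l -> D l.

Lemma seq_closed_and (D1 D2 : C -> Prop) :
  seq_closed D1 -> seq_closed D2 -> seq_closed (fun w => D1 w /\ D2 w).
Proof. intros H1 H2 u l Hu Hl. split; [apply (H1 u) | apply (H2 u)]; firstorder. Qed.

Lemma seq_closed_lipschitz_le0 (phi : C -> R) (K : R) : 0 <= K ->
  (forall a b, Rabs (phi a - phi b) <= K * dist1 a b) -> seq_closed (fun w => phi w <= 0).
Proof.
  intros HK Hphi u l Hu Hl. apply le_epsilon. intros eps Heps.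
  destruct (Hl (eps / (K + 1))) as [N HN]; [apply Rdiv_lt_0_compat; lra |].
  specialize (HN N (Nat.le_refl N)). specialize (Hphi l (u N)). specialize (Hu N).
  rewrite dist1_sym in Hphi. pose proof (Rle_abs (phi l - phi (u N))).
  assert (K * dist1 (u N) l <= eps).
  { apply Rle_trans with (K * (eps / (K + 1))); [apply Rmult_le_compat_l; lra |].
    unfold Rdiv. rewrite <- Rmult_assoc. apply Rmult_le_reg_r with (K + 1); [lra |].
    rewrite Rmult_assoc, Rinv_l by lra. nra. }
  lra.
Qed.

Lemma dist1_cauchy_converges (u : nat -> C) :
  (forall eps, 0 < eps -> exists N, forall n m, (N <= n)%nat -> (N <= m)%nat ->
     dist1 (u n) (u m) < eps) ->
  exists l, converges1 u l.
Proof.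
  intros Hcauchy.
  assert (Hfst : Cauchy_crit (fun n => fst (u n))).
  { intros eps Heps. destruct (Hcauchy eps Heps) as [N HN]. exists N. intros n m Hn Hm.
    specialize (HN n m Hn Hm). unfold dist1, R_dist in *.
    pose proof (Rabs_pos (snd (u n) - snd (u m))). lra. }
  assert (Hsnd : Cauchy_crit (fun n => snd (u n))).
  { intros eps Heps. destruct (Hcauchy eps Heps) as [N HN]. exists N. intros n m Hn Hm.
    specialize (HN n m Hn Hm). unfold dist1, R_dist in *.
    pose proof (Rabs_pos (fst (u n) - fst (u m))). lra. }
  destruct (Rcomplete.R_complete _ Hfst) as [x Hx], (Rcomplete.R_complete _ Hsnd) as [y Hy].
  exists (x, y). intros eps Heps.
  destruct (Hx (eps / 2)) as [N1 HN1]; [lra |]. destruct (Hy (eps / 2)) as [N2 HN2]; [lra |].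
  exists (Nat.max N1 N2). intros n Hn. unfold dist1, R_dist in *. simpl.
  specialize (HN1 n ltac:(lia)). specialize (HN2 n ltac:(lia)). lra.
Qed.

Section Contraction.

Variables (D : C -> Prop) (f : C -> C) (L : R) (w0 : C).
Hypotheses (HL : 0 <= L < 1) (Hclosed : seq_closed D) (Hw0 : D w0)
  (Hstable : forall w, D w -> D (f w))
  (Hlip : forall a b, D a -> D b -> dist1 (f a) (f b) <= L * dist1 a b).

Let u (n : nat) : C := Nat.iter n f w0.
Let d0 : R := dist1 (u 1) (u 0).

Lemma iterate_in_D (n : nat) : D (u n).
Proof. induction n; simpl; auto. Qed.

Lemma iterate_step (n : nat) : dist1 (u (S n)) (u n) <= L ^ n * d0.
Proof.
  induction n as [|n IH].
  - rewrite pow_O, Rmult_1_l. apply Rle_refl.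
  - apply Rle_trans with (L * dist1 (u (S n)) (u n)).
    + exact (Hlip _ _ (iterate_in_D (S n)) (iterate_in_D n)).
    + simpl pow. rewrite Rmult_assoc. apply Rmult_le_compat_l; [lra | exact IH].
Qed.

Lemma iterate_tail (n p : nat) : dist1 (u (n + p)) (u n) <= L ^ n * d0 / (1 - L).
Proof.
  assert (Hd0 : 0 <= d0) by apply dist1_ge0.
  assert (Hexact : dist1 (u (n + p)) (u n) <= L ^ n * d0 * (1 - L ^ p) / (1 - L)).
  { induction p as [|p IH].
    - rewrite Nat.add_0_r. unfold dist1. rewrite !Rminus_diag, Rabs_R0.
      replace (1 - L ^ 0) with 0 by (simpl; ring). unfold Rdiv. rewrite Rmult_0_r, Rmult_0_l. lra.
    - eapply Rle_trans; [apply (dist1_triangle _ (u (n + p)%nat)) |].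
      rewrite Nat.add_succ_r. pose proof (iterate_step (n + p)) as Hstep. rewrite pow_add in Hstep.
      apply Rle_trans with (L ^ n * L ^ p * d0 + L ^ n * d0 * (1 - L ^ p) / (1 - L)); [lra |].
      apply Req_le. simpl. field. lra. }
  eapply Rle_trans; [exact Hexact |].
  pose proof (pow_le L p (proj1 HL)).
  assert (0 <= L ^ n * d0) by (apply Rmult_le_pos; [apply pow_le; lra | exact Hd0]).
  unfold Rdiv. apply Rmult_le_compat_r; [left; apply Rinv_0_lt_compat; lra |]. nra.
Qed.

Lemma iterates_cauchy (eps : R) : 0 < eps ->
  exists N, forall n m, (N <= n)%nat -> (N <= m)%nat -> dist1 (u n) (u m) < eps.
Proof.
  intros Heps. assert (Hd0 : 0 <= d0) by apply dist1_ge0.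
  destruct (pow_lt_1_zero L ltac:(rewrite Rabs_right; lra) (eps * (1 - L) / (2 * (d0 + 1))))
    as [N HN]; [apply Rdiv_lt_0_compat; nra |].
  exists N. intros n m Hn Hm.
  assert (Htail : forall k, (N <= k)%nat -> dist1 (u k) (u N) <= L ^ N * d0 / (1 - L)).
  { intros k Hk. replace k with (N + (k - N))%nat by lia. apply iterate_tail. }
  assert (Hsmall : L ^ N * d0 / (1 - L) < eps / 2).
  { specialize (HN N (le_n N)). rewrite Rabs_right in HN by (apply Rle_ge, pow_le; lra).
    apply (Rmult_lt_compat_r (2 * (d0 + 1))) in HN; [|lra].
    replace (eps * (1 - L) / (2 * (d0 + 1)) * (2 * (d0 + 1))) with (eps * (1 - L)) in HN
      by (field; lra).
    pose proof (pow_le L N (proj1 HL)).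
    apply (Rmult_lt_reg_r (1 - L)); [lra |]. unfold Rdiv. rewrite Rmult_assoc, Rinv_l by lra. nra. }
  pose proof (dist1_triangle (u n) (u N) (u m)). rewrite (dist1_sym (u N)) in *.
  pose proof (Htail n Hn). pose proof (Htail m Hm). lra.
Qed.

Theorem contraction_fixed_point : exists w, D w /\ f w = w.
Proof.
  destruct (dist1_cauchy_converges u iterates_cauchy) as [l Hl].
  pose proof (Hclosed u l iterate_in_D Hl) as HDl.
  exists l. split; [exact HDl |]. apply dist1_eq0, le_epsilon. intros eps Heps.
  destruct (Hl (eps / 2)) as [N HN]; [lra |].
  pose proof (HN N (le_n N)) as HuN. pose proof (HN (S N) (le_S _ _ (le_n N))) as HuSN.
  pose proof (Hlip l (u N) HDl (iterate_in_D N)) as Hstep.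
  change (f (u N)) with (u (S N)) in Hstep. rewrite (dist1_sym l) in Hstep.
  pose proof (dist1_triangle (f l) (u (S N)) l). pose proof (dist1_ge0 (u N) l).
  assert (L * dist1 (u N) l <= dist1 (u N) l) by nra.
  lra.
Qed.

Lemma contraction_fixed_point_unique (a b : C) :
  D a -> D b -> f a = a -> f b = b -> a = b.
Proof.
  intros Ha Hb Hfa Hfb. apply dist1_eq0.
  pose proof (Hlip a b Ha Hb) as H. rewrite Hfa, Hfb in H.
  pose proof (dist1_ge0 a b). nra.
Qed.

End Contraction.

(** * The fixed points of [G_fun] *)

Lemma G_fun_lipschitz (gamma Rr : R) (j : nat) (w0 w1 : C) :
  0 < gamma -> 0 < Rr -> F_inf w0 -> F_inf w1 ->
  dist1 (G_fun gamma j Rr w1) (G_fun gamma j Rr w0) <= 4 / (Rr * sqrt gamma) * dist1 w1 w0.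
Proof.
  intros Hgamma HRr H0 H1. pose proof (sqrt_lt_R0 _ Hgamma).
  destruct (log_Qfrac_lipschitz gamma w0 w1 Hgamma H0 H1) as [HA HB].
  unfold dist1 at 1, G_fun, B_fun. cbn [fst snd].
  set (a0 := A_fun gamma w0) in *. set (a1 := A_fun gamma w1) in *.
  set (b0 := arg_m (Qfrac gamma w0)) in *. set (b1 := arg_m (Qfrac gamma w1)) in *.
  replace (- (b1 + 2 * PI * INR j) / (2 * Rr) - - (b0 + 2 * PI * INR j) / (2 * Rr))
    with ((b1 - b0) / - (2 * Rr)) by (field; lra).
  replace (a1 / (2 * Rr) - a0 / (2 * Rr)) with ((a1 - a0) / (2 * Rr)) by (field; lra).
  rewrite !Rabs_div, Rabs_Ropp, (Rabs_right (2 * Rr)) by lra.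
  replace (4 / (Rr * sqrt gamma) * dist1 w1 w0)
    with (4 / sqrt gamma * dist1 w1 w0 / (2 * Rr) + 4 / sqrt gamma * dist1 w1 w0 / (2 * Rr))
    by (field; lra).
  assert (0 <= / (2 * Rr)) by (left; apply Rinv_0_lt_compat; lra).
  apply Rplus_le_compat; apply Rmult_le_compat_r; assumption.
Qed.

Lemma Rpower_ge1 (x a : R) : 0 <= a * ln x -> 1 <= Rpower x a.
Proof. intros H. unfold Rpower. pose proof (exp_ineq1_le (a * ln x)). lra. Qed.

(* R sqrt gamma >= 600 (gamma^(5/4) + gamma^(-1/4)), and one of these two powers is >= 1. *)
Lemma R_sqrt_gamma_ge (gamma Rr : R) : 0 < gamma ->
  600 * (Rpower gamma (3 / 4) + Rpower gamma (- (3 / 4))) <= Rr -> 600 <= Rr * sqrt gamma.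
Proof.
  intros Hgamma HRr. rewrite <- Rpower_sqrt by exact Hgamma.
  assert (Hpos : forall a, 0 < Rpower gamma a) by (intros; apply exp_pos).
  rewrite <- (Rmult_1_r 600).
  apply Rle_trans
    with (600 * (Rpower gamma (3 / 4) + Rpower gamma (- (3 / 4))) * Rpower gamma (/ 2)).
  - rewrite Rmult_assoc, Rmult_plus_distr_r, <- !Rpower_plus.
    apply Rmult_le_compat_l; [lra |].
    destruct (Rle_dec 0 (ln gamma)).
    + pose proof (Rpower_ge1 gamma (3 / 4 + / 2) ltac:(nra)).
      pose proof (Hpos (- (3 / 4) + / 2)). lra.
    + pose proof (Rpower_ge1 gamma (- (3 / 4) + / 2) ltac:(nra)).
      pose proof (Hpos (3 / 4 + / 2)). lra.
  - apply Rmult_le_compat_r; [left; apply Hpos | exact HRr].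
Qed.

Lemma F_inf_0 : F_inf 0%C.
Proof. unfold F_inf. simpl. rewrite Rabs_R0. lra. Qed.

Lemma G_fun_0 (gamma Rr : R) (j : nat) : 0 < gamma -> 0 < Rr ->
  G_fun gamma j Rr 0%C = (- (PI * INR j / Rr), 0).
Proof.
  intros Hgamma HRr.
  assert (HQ : Qfrac gamma 0%C = 1%C).
  { destruct (sroot_pm_neq0 gamma 0 Hgamma F_inf_0) as [Hplus _].
    rewrite Qfrac_sroot. field.
    intros E. apply Hplus. rewrite E. apply injective_projections; simpl; ring. }
  unfold G_fun, A_fun, B_fun. rewrite HQ, Cmod_1, ln_1.
  change (arg_m 1%C) with (arg_m (1, 0)). rewrite arg_m_re_pos by lra.
  rewrite Rdiv_0_l, atan_0. f_equal; field; lra.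
Qed.

Lemma F_inf_of_ball (c : R) (v : C) : 0 < c -> 0 <= snd v -> dist1 v (- c, 0) <= c / 2 -> F_inf v.
Proof. destruct v as [x y]. unfold F_inf, dist1. simpl. intros. split_Rabs; lra. Qed.

Lemma seq_closed_F_inf : seq_closed F_inf.
Proof.
  intros u l Hu Hl. unfold F_inf. repeat split.
  - apply (seq_closed_lipschitz_le0 fst 1) with u; [lra | | apply Hu | exact Hl].
    intros a b. unfold dist1. split_Rabs; lra.
  - enough (- snd l <= 0) by lra.
    apply (seq_closed_lipschitz_le0 (fun w => - snd w) 1) with u; [lra | | | exact Hl].
    + intros a b. unfold dist1. split_Rabs; lra.
    + intros n. destruct (Hu n) as (_ & H & _). lra.
  - enough (2 * snd l - Rabs (fst l) <= 0) by lra.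
    apply (seq_closed_lipschitz_le0 (fun w => 2 * snd w - Rabs (fst w)) 2) with u;
      [lra | | | exact Hl].
    + intros a b. unfold dist1. split_Rabs; lra.
    + intros n. destruct (Hu n) as (_ & _ & H). lra.
Qed.

Lemma seq_closed_ball (c : C) (r : R) : seq_closed (fun w => dist1 w c <= r).
Proof.
  intros u l Hu Hl. enough (dist1 l c - r <= 0) by lra.
  apply (seq_closed_lipschitz_le0 (fun w => dist1 w c - r) 1) with u; [lra | | | exact Hl].
  - intros a b. pose proof (dist1_triangle a b c). pose proof (dist1_triangle b a c).
    rewrite (dist1_sym b a) in *. split_Rabs; lra.
  - intros n. specialize (Hu n). lra.
Qed.

Lemma A_fun_ge0 (gamma : R) (w : C) : 0 < gamma -> F_inf w -> 0 <= A_fun gamma w.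
Proof.
  intros Hgamma Hw. unfold A_fun. rewrite <- ln_1.
  apply ln_le; [lra | exact (Cmod_Qfrac_ge1 gamma w Hgamma Hw)].
Qed.

Lemma PI_INR_div_pos (j : nat) (Rr : R) : (1 <= j)%nat -> 0 < Rr -> 0 < PI * INR j / Rr.
Proof.
  intros Hj HRr. pose proof (le_INR 1 j Hj). simpl in *. pose proof PI_RGT_0.
  apply Rdiv_lt_0_compat; nra.
Qed.

Lemma G_fun_ball_stable (gamma Rr : R) (j : nat) (w : C) :
  0 < gamma -> 0 < Rr -> (1 <= j)%nat -> 4 / (Rr * sqrt gamma) <= 1 / 3 ->
  let c := PI * INR j / Rr in
  F_inf w -> dist1 w (- c, 0) <= c / 2 ->
  F_inf (G_fun gamma j Rr w) /\ dist1 (G_fun gamma j Rr w) (- c, 0) <= c / 2.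
Proof.
  intros Hgamma HRr Hj HL c Hw Hball. pose proof (PI_INR_div_pos j Rr Hj HRr) as Hc. fold c in Hc.
  assert (Hdist : dist1 (G_fun gamma j Rr w) (- c, 0) <= c / 2).
  { unfold c. rewrite <- (G_fun_0 gamma Rr j Hgamma HRr). fold c.
    eapply Rle_trans; [exact (G_fun_lipschitz gamma Rr j 0 w Hgamma HRr F_inf_0 Hw) |].
    pose proof (dist1_triangle w (- c, 0) 0%C).
    assert (dist1 (- c, 0) 0%C = c) by (unfold dist1; simpl; split_Rabs; lra).
    pose proof (dist1_ge0 w 0%C). pose proof (sqrt_lt_R0 _ Hgamma).
    assert (0 <= 4 / (Rr * sqrt gamma)) by (apply Rlt_le, Rdiv_lt_0_compat; nra).
    nra. }
  split; [| exact Hdist].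
  apply (F_inf_of_ball c); [exact Hc | | exact Hdist].
  unfold G_fun. simpl. apply Rdiv_le_0_compat; [apply A_fun_ge0; assumption | lra].
Qed.

Lemma F_j_of_fixed_point (gamma Rr : R) (j : nat) (w : C) :
  0 < Rr -> F_inf w -> w = G_fun gamma j Rr w -> F_j gamma j w.
Proof.
  intros HRr Hw Hfix. split; [exact Hw |].
  assert (HA : A_fun gamma w = 2 * Rr * snd w) by (rewrite Hfix at 2; simpl; field; lra).
  assert (HB : B_fun gamma j w = - (2 * Rr) * fst w) by (rewrite Hfix at 2; simpl; field; lra).
  destruct (F_inf_elim w Hw) as (H1 & H2 & H3).
  rewrite HA, HB, Rabs_right by nra. nra.
Qed.

Lemma G_fun_fixed_point_index (gamma Rr : R) (j k : nat) (w : C) :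
  0 < Rr -> w = G_fun gamma j Rr w -> w = G_fun gamma k Rr w -> j = k.
Proof.
  intros HRr Hj Hk. apply INR_eq.
  assert (E : fst (G_fun gamma j Rr w) = fst (G_fun gamma k Rr w)) by now rewrite <- Hj, <- Hk.
  unfold G_fun, B_fun in E. simpl in E. pose proof PI_RGT_0.
  apply (Rmult_eq_reg_l (2 * PI)); [| lra].
  apply (Rmult_eq_reg_r (/ (2 * Rr))); [| apply Rinv_neq_0_compat; lra].
  unfold Rdiv in E. lra.
Qed.

Lemma G_fun_fixed_point_exists (gamma Rr : R) (j : nat) :
  0 < gamma -> 0 < Rr -> (1 <= j)%nat -> 4 / (Rr * sqrt gamma) <= 1 / 3 ->
  exists w, F_inf w /\ G_fun gamma j Rr w = w.
Proof.
  intros Hgamma HRr Hj HL. pose proof (sqrt_lt_R0 _ Hgamma).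
  pose proof (PI_INR_div_pos j Rr Hj HRr) as Hc. set (c := PI * INR j / Rr) in *.
  destruct (contraction_fixed_point (fun w => F_inf w /\ dist1 w (- c, 0) <= c / 2)
              (G_fun gamma j Rr) (4 / (Rr * sqrt gamma)) (- c, 0)) as (w & (Hw & _) & Hfix).
  - split; [apply Rlt_le, Rdiv_lt_0_compat; nra | lra].
  - apply seq_closed_and; [exact seq_closed_F_inf | apply seq_closed_ball].
  - split; [apply (F_inf_of_ball c); simpl; try lra |]; unfold dist1; simpl; split_Rabs; lra.
  - intros w [Hw Hball]. exact (G_fun_ball_stable gamma Rr j w Hgamma HRr Hj HL Hw Hball).
  - intros a b [Ha _] [Hb _]. apply G_fun_lipschitz; assumption.
  - now exists w.
Qed.

Theorem proposition2p3 (gamma Rr : R) :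
  0 < gamma ->
  600 * (Rpower gamma (3 / 4) + Rpower gamma (- (3 / 4))) <= Rr ->
  (forall j : nat, (1 <= j)%nat ->
     exists w : C,
       F_inf w /\ w = G_fun gamma j Rr w /\
       (forall w' : C, F_inf w' -> w' = G_fun gamma j Rr w' -> w' = w) /\
       F_j gamma j w) /\
  (forall (j k : nat) (w1 w2 : C), (1 <= j)%nat -> (1 <= k)%nat -> j <> k ->
     F_inf w1 -> w1 = G_fun gamma j Rr w1 ->
     F_inf w2 -> w2 = G_fun gamma k Rr w2 -> w1 <> w2).
Proof.
  intros Hgamma HR.
  pose proof (R_sqrt_gamma_ge gamma Rr Hgamma HR) as HRs. pose proof (sqrt_lt_R0 _ Hgamma).
  assert (HRr : 0 < Rr) by nra.
  assert (HL : 4 / (Rr * sqrt gamma) <= 1 / 3) by (apply Rle_div_l; nra).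
  assert (HL0 : 0 < 4 / (Rr * sqrt gamma)) by (apply Rdiv_lt_0_compat; nra).
  split.
  - intros j Hj.
    destruct (G_fun_fixed_point_exists gamma Rr j Hgamma HRr Hj HL) as (w & Hw & Hfix).
    exists w. split; [exact Hw |]. split; [now symmetry |]. split.
    + intros w' Hw' Hfix'.
      apply (contraction_fixed_point_unique F_inf (G_fun gamma j Rr) (4 / (Rr * sqrt gamma)));
        [split; lra | intros a b Ha Hb; now apply G_fun_lipschitz | exact Hw' | exact Hw
        | now symmetry | exact Hfix].
    + apply (F_j_of_fixed_point gamma Rr); [exact HRr | exact Hw | now symmetry].
  - intros j k w1 w2 _ _ Hjk _ Hfix1 _ Hfix2 ->.
    exact (Hjk (G_fun_fixed_point_index gamma Rr j k w2 HRr Hfix1 Hfix2)).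
Qed.
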